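(* There exists $\epsilon_0>0$ such that, for all sufficiently large $a$ and all $\tau\in[0,1]$, every solution $(c,\mu)$ of the slab problem $P_{\tau,a}$ with $c=0$ satisfies $\nu(0)>\epsilon_0$.
   Context: $\Theta=(\theta_{\min},\theta_{\max})$, $0<\theta_{\min}<\theta_{\max}<\infty$, $|\Theta|=\theta_{\max}-\theta_{\min}$, $\alpha,r>0$. For $\tau\in[0,1]$, $g_\tau(\theta)=\theta_{\min}+\tau(\theta-\theta_{\min})$. Slab problem $P_{\tau,a}$: a pair $(c,\mu)$, $c\in\mathbb R$, $\mu\ge0$ of class $C^2$ on $[-a,a]\times\overline\Theta$, with $-c\mu_\xi-g_\tau(\theta)\mu_{\xi\xi}-\alpha\mu_{\theta\theta}=r\mu(1-\nu)$ on $(-a,a)\times\Theta$, $\mu_\theta(\xi,\theta_{\min})=\mu_\theta(\xi,\theta_{\max})=0$, $\mu(-a,\theta)=|\Theta|^{-1}$, $\mu(a,\theta)=0$, where $\nu(\xi)=\int_\Theta\mu(\xi,\theta)d\theta$. *)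

From Stdlib Require Import Reals Lra.
Open Scope R_scope.

Definition g_tau (thmin tau th : R) : R := thmin + tau * (th - thmin).

Definition in_closed_rect (a thmin thmax x t : R) : Prop :=
  -a <= x <= a /\ thmin <= t <= thmax.

Definition in_open_rect (a thmin thmax x t : R) : Prop :=
  -a < x < a /\ thmin < t < thmax.

Definition cont_on_rect (a thmin thmax : R) (f : R -> R -> R) : Prop :=
  forall x t, in_closed_rect a thmin thmax x t ->
  forall eps, 0 < eps -> exists delta, 0 < delta /\
    forall y s, in_closed_rect a thmin thmax y s ->
      Rabs (y - x) < delta -> Rabs (s - t) < delta ->
      Rabs (f y s - f x t) < eps.

(* mu is C^2 on [-a,a] x [thmin,thmax], with first partials mu_x, mu_t and
   second partials mu_xx, mu_xt (= d/dtheta of mu_x), mu_tx (= d/dxi of mu_t),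
   mu_tt: the partials exist in the open rectangle and, together with mu,
   extend continuously to the closed rectangle (these extensions are the
   given functions). *)
Definition C2_on_rect (a thmin thmax : R)
  (mu mu_x mu_t mu_xx mu_xt mu_tx mu_tt : R -> R -> R) : Prop :=
  (forall x t, in_open_rect a thmin thmax x t ->
     derivable_pt_lim (fun y => mu y t) x (mu_x x t) /\
     derivable_pt_lim (fun s => mu x s) t (mu_t x t) /\
     derivable_pt_lim (fun y => mu_x y t) x (mu_xx x t) /\
     derivable_pt_lim (fun s => mu_x x s) t (mu_xt x t) /\
     derivable_pt_lim (fun y => mu_t y t) x (mu_tx x t) /\
     derivable_pt_lim (fun s => mu_t x s) t (mu_tt x t)) /\
  cont_on_rect a thmin thmax mu /\
  cont_on_rect a thmin thmax mu_x /\ cont_on_rect a thmin thmax mu_t /\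
  cont_on_rect a thmin thmax mu_xx /\ cont_on_rect a thmin thmax mu_xt /\
  cont_on_rect a thmin thmax mu_tx /\ cont_on_rect a thmin thmax mu_tt.

Definition slab_solution (thmin thmax alpha r tau a c : R)
  (mu mu_x mu_t mu_xx mu_xt mu_tx mu_tt : R -> R -> R) (nu : R -> R) : Prop :=
  C2_on_rect a thmin thmax mu mu_x mu_t mu_xx mu_xt mu_tx mu_tt /\
  (forall x t, in_closed_rect a thmin thmax x t -> 0 <= mu x t) /\
  (forall x, -a <= x <= a ->
     forall pr : Riemann_integrable (fun t => mu x t) thmin thmax,
       nu x = RiemannInt pr) /\
  (forall x t, in_open_rect a thmin thmax x t ->
     - c * mu_x x t - g_tau thmin tau t * mu_xx x t - alpha * mu_tt x t
       = r * mu x t * (1 - nu x)) /\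
  (forall x, -a <= x <= a -> mu_t x thmin = 0 /\ mu_t x thmax = 0) /\
  (forall t, thmin <= t <= thmax ->
     mu (-a) t = / (thmax - thmin) /\ mu a t = 0).

From Stdlib Require Import Reals Lra Classical ClassicalEpsilon.
From Coquelicot Require Import Coquelicot.
Open Scope R_scope.

(* Put w(ξ) = ∫_Θ g_τ(θ) μ(ξ, θ) dθ.  Integrating the equation (c = 0)
   over Θ and using the Neumann conditions gives  -w'' = r ν (1 - ν), and
   θ_min ν <= w <= θ_max ν.  Hence w is concave wherever w < θ_min (there
   ν < 1), while w(-a) >= θ_min and w(a) = 0.  A maximum-principle comparison
   with the convex parabola θ_min (a - ξ)^2 / (4 a^2) yields w(0) >= θ_min / 4,
   so ν(0) >= θ_min / (4 θ_max) > ε0.  No derivative of w is ever formed: the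
   concavity is expressed through second differences, obtained by integrating
   a pointwise Taylor bound on μ(·, θ) against g_τ. *)

Definition relcont (lo hi : R) (f : R -> R) : Prop :=
  forall z, lo <= z <= hi -> forall eps, 0 < eps -> exists d, 0 < d /\
    forall y, lo <= y <= hi -> Rabs (y - z) < d -> Rabs (f y - f z) < eps.

(* The retraction of R onto [lo, hi]; composing with it turns relative
   continuity on [lo, hi] into continuity on all of R. *)
Definition clamp (lo hi t : R) : R := Rmax lo (Rmin hi t).

Lemma clamp_in (lo hi t : R) : lo <= hi -> lo <= clamp lo hi t <= hi.
Proof. intros; unfold clamp, Rmax, Rmin; repeat destruct Rle_dec; lra. Qed.

Lemma clamp_id (lo hi t : R) : lo <= t <= hi -> clamp lo hi t = t.
Proof. intros; unfold clamp, Rmax, Rmin; repeat destruct Rle_dec; lra. Qed.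

Lemma clamp_lip (lo hi y z : R) : lo <= hi ->
  Rabs (clamp lo hi y - clamp lo hi z) <= Rabs (y - z).
Proof.
  intros; unfold clamp, Rmax, Rmin; repeat destruct Rle_dec;
  unfold Rabs; repeat destruct Rcase_abs; lra.
Qed.

Lemma relcont_clamp (lo hi : R) (f : R -> R) : lo <= hi -> relcont lo hi f ->
  forall z, continuity_pt (fun t => f (clamp lo hi t)) z.
Proof.
  intros Hlh Hf z eps Heps.
  destruct (Hf (clamp lo hi z) (clamp_in lo hi z Hlh) eps Heps) as [d [Hd Hclose]].
  exists d; split; [exact Hd|].
  intros y [_ Hy]; simpl in *; unfold Rdist in *.
  apply Hclose; [apply clamp_in; exact Hlh|].
  eapply Rle_lt_trans; [apply clamp_lip; exact Hlh | exact Hy].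
Qed.

Lemma relcont_of_continuity (lo hi : R) (f : R -> R) :
  (forall z, continuity_pt f z) -> relcont lo hi f.
Proof.
  intros Hf z _ eps Heps.
  destruct (Hf z eps Heps) as [d [Hd Hclose]].
  exists d; split; [exact Hd|]; intros y _ Hyz.
  destruct (Req_dec y z) as [->|Hne].
  - rewrite Rminus_eq_0, Rabs_R0; exact Heps.
  - exact (Hclose y (conj (conj I (not_eq_sym Hne)) Hyz)).
Qed.

Lemma clamp_continuous_ex_RInt (lo hi : R) (F : R -> R) : lo <= hi ->
  (forall z, continuity_pt (fun t => F (clamp lo hi t)) z) -> ex_RInt F lo hi.
Proof.
  intros Hlh HF.
  apply ex_RInt_ext with (f := fun t => F (clamp lo hi t)).
  - intros t Ht; rewrite Rmin_left, Rmax_right in Ht by lra.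
    rewrite clamp_id; lra.
  - apply (ex_RInt_continuous (V := R_CompleteNormedModule)); intros z _.
    apply continuity_pt_filterlim, HF.
Qed.

Lemma relcont_ex_RInt (lo hi : R) (f : R -> R) : lo <= hi -> relcont lo hi f -> ex_RInt f lo hi.
Proof. intros; apply clamp_continuous_ex_RInt, relcont_clamp; auto. Qed.

Lemma relcont_mult_ex_RInt (lo hi : R) (f g : R -> R) :
  lo <= hi -> relcont lo hi f -> relcont lo hi g ->
  ex_RInt (fun t => f t * g t) lo hi.
Proof.
  intros; apply clamp_continuous_ex_RInt; [assumption|]; intros z.
  apply (continuity_pt_mult (fun t => f (clamp lo hi t)) (fun t => g (clamp lo hi t)));
    apply relcont_clamp; assumption.
Qed.

Lemma RInt_plus_R (f g : R -> R) (lo hi : R) : ex_RInt f lo hi -> ex_RInt g lo hi ->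
  RInt (fun t => f t + g t) lo hi = RInt f lo hi + RInt g lo hi.
Proof. exact (RInt_plus f g lo hi). Qed.

Lemma RInt_minus_R (f g : R -> R) (lo hi : R) : ex_RInt f lo hi -> ex_RInt g lo hi ->
  RInt (fun t => f t - g t) lo hi = RInt f lo hi - RInt g lo hi.
Proof. exact (RInt_minus f g lo hi). Qed.

Lemma RInt_scal_R (f : R -> R) (k lo hi : R) : ex_RInt f lo hi ->
  RInt (fun t => k * f t) lo hi = k * RInt f lo hi.
Proof. exact (RInt_scal f lo hi k). Qed.

Lemma RInt_const_R (k lo hi : R) : RInt (fun _ => k) lo hi = (hi - lo) * k.
Proof. exact (RInt_const lo hi k). Qed.

Lemma ex_RInt_plus_R (f g : R -> R) (lo hi : R) : ex_RInt f lo hi -> ex_RInt g lo hi ->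
  ex_RInt (fun t => f t + g t) lo hi.
Proof. exact (ex_RInt_plus f g lo hi). Qed.

Lemma ex_RInt_minus_R (f g : R -> R) (lo hi : R) : ex_RInt f lo hi -> ex_RInt g lo hi ->
  ex_RInt (fun t => f t - g t) lo hi.
Proof. exact (ex_RInt_minus f g lo hi). Qed.

Lemma ex_RInt_scal_R (f : R -> R) (k lo hi : R) :
  ex_RInt f lo hi -> ex_RInt (fun t => k * f t) lo hi.
Proof. exact (ex_RInt_scal f lo hi k). Qed.

Lemma ex_RInt_const_R (k lo hi : R) : ex_RInt (fun _ => k) lo hi.
Proof. exact (ex_RInt_const (V := R_CompleteNormedModule) lo hi k). Qed.

Lemma RInt_weight_bounds (lo hi m M : R) (g f : R -> R) : lo <= hi ->
  ex_RInt f lo hi -> ex_RInt (fun t => g t * f t) lo hi ->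
  (forall t, lo < t < hi -> 0 <= f t /\ m <= g t <= M) ->
  m * RInt f lo hi <= RInt (fun t => g t * f t) lo hi <= M * RInt f lo hi.
Proof.
  intros Hlh Hf Hgf Hpt; rewrite <- !RInt_scal_R by exact Hf.
  split; apply RInt_le; auto using ex_RInt_scal_R;
    intros t Ht; destruct (Hpt t Ht) as [Hft Hgt]; nra.
Qed.

Lemma rect_slice_relcont (a lo hi : R) (F : R -> R -> R) (y : R) :
  cont_on_rect a lo hi F -> -a <= y <= a -> relcont lo hi (F y).
Proof.
  intros HF Hy z Hz eps Heps.
  destruct (HF y z (conj Hy Hz) eps Heps) as [d [Hd Hclose]].
  exists d; split; [exact Hd|]; intros t Ht Htz.
  apply Hclose; [split; assumption | rewrite Rminus_eq_0, Rabs_R0; exact Hd | exact Htz].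
Qed.

(* Continuity on the compact rectangle is uniform in θ: a modulus in ξ at a
   fixed point ξ = x works simultaneously for all θ (Lebesgue covering lemma). *)
Lemma rect_cont_uniform_in_t (a lo hi : R) (F : R -> R -> R) (x : R) :
  lo <= hi -> cont_on_rect a lo hi F -> -a <= x <= a ->
  forall eps, 0 < eps -> exists d, 0 < d /\ forall y t, -a <= y <= a -> lo <= t <= hi ->
    Rabs (y - x) < d -> Rabs (F y t - F x t) < eps.
Proof.
  intros Hlh HF Hx eps Heps.
  assert (Hloc : forall t, exists d : posreal, lo <= t <= hi ->
    forall y s, in_closed_rect a lo hi y s -> Rabs (y - x) < d -> Rabs (s - t) < d ->
      Rabs (F y s - F x t) < eps / 2).
  { intros t; destruct (classic (lo <= t <= hi)) as [Ht | Ht].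
    - destruct (HF x t (conj Hx Ht) (eps / 2)) as [d [Hd Hclose]]; [lra|].
      exists (mkposreal d Hd); intros _; exact Hclose.
    - exists (mkposreal 1 Rlt_0_1); intros; contradiction. }
  set (delta := fun t => proj1_sig (constructive_indefinite_description _ (Hloc t))).
  assert (Hdelta : forall t, lo <= t <= hi ->
    forall y s, in_closed_rect a lo hi y s -> Rabs (y - x) < delta t ->
      Rabs (s - t) < delta t -> Rabs (F y s - F x t) < eps / 2).
  { intros t; unfold delta; destruct constructive_indefinite_description; simpl; auto. }
  destruct (compactness_value_1d lo hi delta) as [d Hd].
  exists d; split; [apply cond_pos|]; intros y t Hy Ht Hyx.
  apply NNPP; intro Hfar; apply (Hd t Ht); intros [t0 [Ht0 [Htt0 Hdt0]]]; apply Hfar.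
  assert (Hy_t0 := Hdelta t0 Ht0 y t (conj Hy Ht) (Rlt_le_trans _ _ _ Hyx Hdt0) Htt0).
  assert (Hx_t0 := Hdelta t0 Ht0 x t (conj Hx Ht)).
  rewrite Rminus_eq_0, Rabs_R0 in Hx_t0; specialize (Hx_t0 (cond_pos _) Htt0).
  replace (F y t - F x t) with ((F y t - F x t0) - (F x t - F x t0)) by ring.
  eapply Rle_lt_trans; [apply Rabs_triang|]; rewrite Rabs_Ropp; lra.
Qed.

Lemma weighted_slice_RInt_relcont (a lo hi K : R) (g : R -> R) (F : R -> R -> R) :
  lo <= hi -> relcont lo hi g -> (forall t, lo <= t <= hi -> Rabs (g t) <= K) ->
  cont_on_rect a lo hi F ->
  relcont (-a) a (fun y => RInt (fun t => g t * F y t) lo hi).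
Proof.
  intros Hlh Hg HK HF z Hz eps Heps.
  assert (HK0 : 0 <= K) by (eapply Rle_trans; [apply Rabs_pos | apply (HK lo); lra]).
  set (e := eps / (2 * ((K + 1) * (hi - lo + 1)))).
  assert (He : 0 < e) by (unfold e; apply Rdiv_lt_0_compat; nra).
  destruct (rect_cont_uniform_in_t a lo hi F z Hlh HF Hz e He) as [d [Hd Hmod]].
  exists d; split; [exact Hd|]; intros y Hy Hyz.
  assert (Hint : forall u, -a <= u <= a -> ex_RInt (fun t => g t * F u t) lo hi)
    by (intros u Hu; apply relcont_mult_ex_RInt; eauto using rect_slice_relcont).
  rewrite <- RInt_minus_R by auto.
  eapply Rle_lt_trans.
  { apply (abs_RInt_le_const _ lo hi (K * e)); [exact Hlh | apply ex_RInt_minus_R; auto|].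
    intros t Ht; replace (g t * F y t - g t * F z t) with (g t * (F y t - F z t)) by ring.
    rewrite Rabs_mult; apply Rmult_le_compat; try apply Rabs_pos; auto.
    left; apply Hmod; assumption. }
  assert (Hsmall : (hi - lo) * (K * e) <= eps / 2).
  { unfold e; apply Rmult_le_reg_r with (2 * ((K + 1) * (hi - lo + 1))); [nra|].
    field_simplify; [nra | nra]. }
  lra.
Qed.

(* Fundamental theorem of calculus when the primitive is differentiable only in
   the open interval but both it and its derivative are continuous up to the
   ends: compare [F] with the integral of the clamped derivative via the MVT. *)
Lemma RInt_derivative_open (F dF : R -> R) (lo hi : R) : lo < hi ->
  relcont lo hi F -> relcont lo hi dF ->
  (forall t, lo < t < hi -> derivable_pt_lim F t (dF t)) ->
  RInt dF lo hi = F hi - F lo.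
Proof.
  intros Hlh HF HdF HD.
  set (Fc := fun t => F (clamp lo hi t)); set (dFc := fun t => dF (clamp lo hi t)).
  assert (CF : forall z, continuity_pt Fc z) by (apply relcont_clamp; auto; lra).
  assert (CdF : forall z, continuity_pt dFc z) by (apply relcont_clamp; auto; lra).
  assert (Int_dFc : forall u v, ex_RInt dFc u v).
  { intros u v; apply (ex_RInt_continuous (V := R_CompleteNormedModule)).
    intros z _; apply continuity_pt_filterlim, CdF. }
  set (G := fun u => RInt dFc lo u).
  assert (DG : forall u, derivable_pt_lim G u (dFc u)).
  { intros u; apply is_derive_Reals, (is_derive_RInt (V := R_NormedModule) dFc G lo u).
    - exists (mkposreal 1 Rlt_0_1); intros y _.
      exact (RInt_correct (V := R_CompleteNormedModule) dFc lo y (Int_dFc lo y)).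
    - apply continuity_pt_filterlim, CdF. }
  assert (Hagree : forall t, lo <= t <= hi -> dFc t = dF t)
    by (intros t Ht; unfold dFc; rewrite clamp_id; auto).
  (* [Fc - G] has zero derivative inside, hence is constant on [lo, hi]. *)
  destruct (MVT_gen (fun u => Fc u - G u) lo hi (fun _ => 0)) as [c [_ Hc]].
  - rewrite Rmin_left, Rmax_right by lra; intros t Ht.
    apply is_derive_Reals; replace 0 with (dF t - dFc t) by (rewrite Hagree; lra).
    apply derivable_pt_lim_minus; [|apply DG].
    apply is_derive_Reals, is_derive_ext_loc with F; [|apply is_derive_Reals, HD; exact Ht].
    assert (Hr : 0 < Rmin (t - lo) (hi - t)) by (apply Rmin_pos; lra).
    exists (mkposreal _ Hr); intros y Hy; unfold ball in Hy; simpl in Hy.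
    unfold AbsRing_ball, abs, minus, plus, opp in Hy; simpl in Hy.
    unfold Fc; rewrite clamp_id; [reflexivity|].
    pose proof (Rmin_l (t - lo) (hi - t)); pose proof (Rmin_r (t - lo) (hi - t)).
    unfold Rabs in Hy; destruct Rcase_abs in Hy; lra.
  - intros t _; apply continuity_pt_minus; [apply CF|].
    apply derivable_continuous_pt; eexists; apply DG.
  - unfold G, Fc in Hc; rewrite RInt_point, !clamp_id in Hc by lra.
    rewrite <- (RInt_ext dFc) by (intros t Ht; rewrite Rmin_left, Rmax_right in Ht by lra;
      apply Hagree; lra).
    change (@zero R_CompleteNormedModule) with 0 in Hc; lra.
Qed.

Lemma derivable_pt_lim_translate (h : R -> R) (x u l : R) :
  derivable_pt_lim h (x + u) l -> derivable_pt_lim (fun v => h (x + v)) u l.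
Proof.
  intros Hh; apply is_derive_Reals; apply is_derive_Reals in Hh.
  replace l with (scal 1 l) by (unfold scal; simpl; unfold mult; simpl; ring).
  apply (is_derive_comp h (fun v => x + v)); [exact Hh|].
  apply is_derive_Reals; replace 1 with (0 + 1) by ring.
  apply derivable_pt_lim_plus; [apply derivable_pt_lim_const | apply derivable_pt_lim_id].
Qed.

Lemma derivable_pt_lim_reflect (h : R -> R) (x u l : R) :
  derivable_pt_lim h (x - u) l -> derivable_pt_lim (fun v => h (x - v)) u (- l).
Proof.
  intros Hh; apply is_derive_Reals; apply is_derive_Reals in Hh.
  replace (- l) with (scal (-1) l) by (unfold scal; simpl; unfold mult; simpl; ring).
  apply (is_derive_comp h (fun v => x - v)); [exact Hh|].
  apply is_derive_Reals; replace (-1) with (0 - 1) by ring.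
  apply derivable_pt_lim_minus; [apply derivable_pt_lim_const | apply derivable_pt_lim_id].
Qed.

Lemma nonincreasing_of_deriv_nonpos (p dp : R -> R) (s : R) : 0 <= s ->
  (forall u, 0 <= u <= s -> derivable_pt_lim p u (dp u)) ->
  (forall u, 0 <= u <= s -> dp u <= 0) -> p s <= p 0.
Proof.
  intros Hs HD Hneg; destruct (Req_dec s 0) as [->|Hs0]; [lra|].
  destruct (MVT_gen p 0 s dp) as [c [Hc Hmvt]].
  - rewrite Rmin_left, Rmax_right by lra; intros u Hu; apply is_derive_Reals, HD; lra.
  - rewrite Rmin_left, Rmax_right by lra; intros u Hu.
    apply derivable_continuous_pt; eexists; apply HD; lra.
  - rewrite Rmin_left, Rmax_right in Hc by lra.
    assert (dp c * (s - 0) <= 0) by (apply Rmult_le_0_r; [apply Hneg | ]; lra).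
    lra.
Qed.

Lemma second_difference_le (f f1 f2 : R -> R) (x s M : R) : 0 <= s ->
  (forall y, x - s <= y <= x + s ->
     derivable_pt_lim f y (f1 y) /\ derivable_pt_lim f1 y (f2 y)) ->
  (forall y, x - s <= y <= x + s -> f2 y <= M) ->
  f (x + s) + f (x - s) - 2 * f x <= M * s ^ 2.
Proof.
  intros Hs HD HM.
  set (q1 := fun u => f1 (x + u) - f1 (x - u) - 2 * M * u).
  assert (Dq1 : forall u, 0 <= u <= s ->
    derivable_pt_lim q1 u (f2 (x + u) - - f2 (x - u) - 2 * M * 1)).
  { intros u Hu; unfold q1.
    apply derivable_pt_lim_minus; [apply derivable_pt_lim_minus|].
    - apply derivable_pt_lim_translate, (HD (x + u)); lra.
    - apply derivable_pt_lim_reflect, (HD (x - u)); lra.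
    - apply derivable_pt_lim_scal, derivable_pt_lim_id. }
  (* q1 = d/du of the second difference minus M u^2, and q1 <= q1 0 = 0 *)
  assert (Hq1 : forall u, 0 <= u <= s -> q1 u <= 0).
  { intros u Hu.
    replace 0 with (q1 0) by (unfold q1; rewrite Rplus_0_r, Rminus_0_r; ring).
    apply nonincreasing_of_deriv_nonpos with
      (dp := fun v => f2 (x + v) - - f2 (x - v) - 2 * M * 1); [lra| |].
    - intros v Hv; apply Dq1; lra.
    - intros v Hv; assert (f2 (x + v) <= M) by (apply HM; lra).
      assert (f2 (x - v) <= M) by (apply HM; lra); lra. }
  set (q := fun u => f (x + u) + f (x - u) - 2 * f x - M * (u * u)).
  assert (Hq : q s <= q 0).
  { apply nonincreasing_of_deriv_nonpos with (dp := q1); [exact Hs| |exact Hq1].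
    intros u Hu; unfold q.
    replace (q1 u) with (f1 (x + u) + - f1 (x - u) - 0 - M * (1 * u + u * 1))
      by (unfold q1; ring).
    apply derivable_pt_lim_minus; [apply derivable_pt_lim_minus|].
    - apply derivable_pt_lim_plus.
      + apply derivable_pt_lim_translate, (HD (x + u)); lra.
      + apply derivable_pt_lim_reflect, (HD (x - u)); lra.
    - apply derivable_pt_lim_const.
    - apply derivable_pt_lim_scal, derivable_pt_lim_mult; apply derivable_pt_lim_id. }
  unfold q in Hq; rewrite Rplus_0_r, Rminus_0_r in Hq; simpl; lra.
Qed.

(* Let w be continuous on [-a, a] with w(-a) >= m > 0
   and w(a) >= 0, and "weakly concave" wherever w < m: there, its second
   differences are o(s^2) along some small s.  Then w lies above the convex
   parabola m (a - x)^2 / (4 a^2), which joins (-a, m) to (a, 0): at a minimum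
   point of w minus the parabola lying below zero, the parabola's second
   difference m s^2 / (2 a^2) would exceed that of w. *)
Lemma concave_barrier (a m : R) (w : R -> R) :
  0 < a -> 0 < m -> relcont (-a) a w -> m <= w (-a) -> 0 <= w a ->
  (forall x, -a < x < a -> w x < m -> forall e, 0 < e ->
     exists s, 0 < s /\ -a <= x - s /\ x + s <= a /\
       w (x + s) + w (x - s) - 2 * w x <= e * s ^ 2) ->
  forall x, -a <= x <= a -> m * (a - x) ^ 2 / (4 * a ^ 2) <= w x.
Proof.
  intros Ha Hm Hw Hleft Hright Hconc.
  set (phi := fun x => m * (a - x) ^ 2 / (4 * a ^ 2)).
  destruct (continuity_ab_min (fun x => w (clamp (-a) a x) - phi x) (-a) a ltac:(lra))
    as [xs [Hmin Hxs]].
  { intros z _; apply continuity_pt_minus; [apply relcont_clamp; auto; lra|].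
    unfold phi; reg. }
  rewrite clamp_id in Hmin by exact Hxs.
  assert (Hmin' : forall y, -a <= y <= a -> w xs - phi xs <= w y - phi y).
  { intros y Hy; specialize (Hmin y Hy); rewrite clamp_id in Hmin; auto. }
  intros x Hx; apply Rnot_lt_le; intros Hbelow; fold (phi x) in Hbelow.
  assert (Hneg : w xs - phi xs < 0) by (specialize (Hmin' x Hx); lra).
  assert (Hphi_left : phi (-a) = m) by (unfold phi; field; lra).
  assert (Hphi_right : phi a = 0) by (unfold phi; field; lra).
  assert (Hxs_int : -a < xs < a).
  { split; apply Rnot_le_lt; intros Hle.
    - replace xs with (-a) in Hneg by lra; lra.
    - replace xs with a in Hneg by lra; lra. }
  assert (Hphi_xs : phi xs <= m).
  { assert (Hsq : (a - xs) ^ 2 <= 4 * a ^ 2) by nra.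
    unfold phi; apply Rmult_le_reg_r with (4 * a ^ 2); [nra|].
    unfold Rdiv; rewrite Rmult_assoc, Rinv_l, Rmult_1_r by nra; nra. }
  set (e := m / (4 * a ^ 2)).
  assert (He : 0 < e) by (unfold e; apply Rdiv_lt_0_compat; nra).
  destruct (Hconc xs Hxs_int ltac:(lra) e He) as [s [Hs [Hs_left [Hs_right Hsd]]]].
  assert (Hphi_sd : phi (xs + s) + phi (xs - s) - 2 * phi xs = 2 * e * s ^ 2)
    by (unfold phi, e; field; lra).
  pose proof (Hmin' (xs + s) ltac:(lra)); pose proof (Hmin' (xs - s) ltac:(lra)).
  assert (0 < e * s ^ 2) by (apply Rmult_lt_0_compat; [exact He | apply pow_lt; exact Hs]).
  lra.
Qed.

(* The θ-average of μ weighted by the diffusion coefficient g_τ; with c = 0 the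
   equation integrated in θ reads  -(d²/dξ²) w = r ν (1 - ν). *)
Definition weighted_marginal (thmin thmax tau : R) (mu : R -> R -> R) (y : R) : R :=
  RInt (fun t => g_tau thmin tau t * mu y t) thmin thmax.

Lemma g_tau_bounds (thmin thmax tau t : R) : 0 <= tau <= 1 -> thmin <= t <= thmax ->
  thmin <= g_tau thmin tau t <= thmax.
Proof. intros; unfold g_tau; split; nra. Qed.

Lemma g_tau_relcont (thmin tau lo hi : R) : relcont lo hi (g_tau thmin tau).
Proof. apply relcont_of_continuity; intros z; unfold g_tau; reg. Qed.

Section ZeroSpeedSolution.

Variables thmin thmax alpha r tau a : R.
Variables mu mu_x mu_t mu_xx mu_xt mu_tx mu_tt : R -> R -> R.
Variable nu : R -> R.
Hypothesis thmin_pos : 0 < thmin.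
Hypothesis thmin_lt_thmax : thmin < thmax.
Hypothesis r_nonneg : 0 <= r.
Hypothesis tau_range : 0 <= tau <= 1.
Hypothesis a_pos : 0 < a.
Hypothesis sol :
  slab_solution thmin thmax alpha r tau a 0 mu mu_x mu_t mu_xx mu_xt mu_tx mu_tt nu.

Local Notation g := (g_tau thmin tau).
Local Notation w := (weighted_marginal thmin thmax tau mu).

Lemma sol_mu_cont : cont_on_rect a thmin thmax mu.
Proof. destruct sol as [[_ [H _]] _]; exact H. Qed.

Lemma sol_gmu_ex_RInt (y : R) : -a <= y <= a ->
  ex_RInt (fun t => g t * mu y t) thmin thmax.
Proof.
  intros Hy; apply relcont_mult_ex_RInt; [lra | apply g_tau_relcont|].
  exact (rect_slice_relcont a thmin thmax mu y sol_mu_cont Hy).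
Qed.

Lemma sol_mu_ex_RInt (y : R) : -a <= y <= a -> ex_RInt (mu y) thmin thmax.
Proof.
  intros Hy; apply relcont_ex_RInt; [lra|].
  exact (rect_slice_relcont a thmin thmax mu y sol_mu_cont Hy).
Qed.

Lemma sol_nu_RInt (y : R) : -a <= y <= a -> nu y = RInt (mu y) thmin thmax.
Proof.
  intros Hy; destruct sol as [_ [_ [Hnu _]]].
  rewrite (Hnu y Hy (ex_RInt_Reals_0 _ _ _ (sol_mu_ex_RInt y Hy))).
  symmetry; apply RInt_Reals.
Qed.

Lemma sol_nu_nonneg (y : R) : -a <= y <= a -> 0 <= nu y.
Proof.
  intros Hy; rewrite sol_nu_RInt by exact Hy.
  apply RInt_ge_0; [lra | apply sol_mu_ex_RInt; exact Hy|].
  intros t Ht; destruct sol as [_ [Hpos _]]; apply Hpos; split; lra.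
Qed.

Lemma sol_marginal_bounds (y : R) : -a <= y <= a ->
  thmin * nu y <= w y <= thmax * nu y.
Proof.
  intros Hy; rewrite sol_nu_RInt by exact Hy.
  apply RInt_weight_bounds; [lra | apply sol_mu_ex_RInt, Hy | apply sol_gmu_ex_RInt, Hy|].
  intros t Ht; destruct sol as [_ [Hpos _]]; split.
  - apply Hpos; split; lra.
  - apply g_tau_bounds; [exact tau_range | lra].
Qed.

Lemma sol_w_left : thmin <= w (-a).
Proof.
  destruct sol as [_ [_ [_ [_ [_ HDir]]]]].
  apply Rle_trans with (RInt (fun _ => thmin / (thmax - thmin)) thmin thmax);
    [right; rewrite RInt_const_R; field; lra|].
  apply RInt_le; [lra | apply ex_RInt_const_R | apply sol_gmu_ex_RInt; lra|].
  intros t Ht; rewrite (proj1 (HDir t ltac:(lra))).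
  destruct (g_tau_bounds thmin thmax tau t tau_range ltac:(lra)).
  unfold Rdiv; apply Rmult_le_compat_r; [left; apply Rinv_0_lt_compat; lra | lra].
Qed.

Lemma sol_w_right : w a = 0.
Proof.
  destruct sol as [_ [_ [_ [_ [_ HDir]]]]].
  unfold weighted_marginal; transitivity (RInt (fun _ => 0) thmin thmax);
    [| rewrite RInt_const_R; ring].
  apply RInt_ext; intros t Ht; rewrite Rmin_left, Rmax_right in Ht by lra.
  rewrite (proj2 (HDir t ltac:(lra))); apply Rmult_0_r.
Qed.

Lemma sol_w_relcont : relcont (-a) a w.
Proof.
  apply (weighted_slice_RInt_relcont a thmin thmax thmax); [lra | apply g_tau_relcont | |].
  - intros t Ht; destruct (g_tau_bounds thmin thmax tau t tau_range Ht).
    rewrite Rabs_right; lra.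
  - exact sol_mu_cont.
Qed.

(* The Neumann condition in θ makes the θ-diffusion term integrate to zero. *)
Lemma sol_mu_tt_RInt (x : R) : -a < x < a -> RInt (mu_tt x) thmin thmax = 0.
Proof.
  intros Hx; destruct sol as [[HD [_ [_ [Cmut [_ [_ [_ Cmutt]]]]]]] [_ [_ [_ [HBC _]]]]].
  rewrite (RInt_derivative_open (mu_t x) (mu_tt x) thmin thmax thmin_lt_thmax).
  - destruct (HBC x ltac:(lra)) as [Hlo Hhi]; rewrite Hlo, Hhi; apply Rminus_diag_eq; reflexivity.
  - apply (rect_slice_relcont a); auto; lra.
  - apply (rect_slice_relcont a); auto; lra.
  - intros t Ht; apply (HD x t (conj Hx Ht)).
Qed.

Lemma sol_integrated_equation (x : R) : -a < x < a ->
  RInt (fun t => g t * mu_xx x t) thmin thmax = - (r * nu x * (1 - nu x)).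
Proof.
  intros Hx; destruct sol as [[_ [_ [_ [_ [Cmuxx [_ [_ Cmutt]]]]]]] [_ [_ [Heq _]]]].
  assert (Hx' : -a <= x <= a) by lra.
  assert (Int_tt := relcont_ex_RInt _ _ _ (Rlt_le _ _ thmin_lt_thmax)
    (rect_slice_relcont a thmin thmax mu_tt x Cmutt Hx')).
  assert (Int_mu := sol_mu_ex_RInt x Hx').
  transitivity (RInt (fun t => - alpha * mu_tt x t - r * (1 - nu x) * mu x t) thmin thmax).
  - apply RInt_ext; intros t Ht; rewrite Rmin_left, Rmax_right in Ht by lra.
    pose proof (Heq x t (conj Hx Ht)); lra.
  - rewrite RInt_minus_R, !RInt_scal_R, sol_mu_tt_RInt, <- sol_nu_RInt by
      (auto using ex_RInt_scal_R); nra.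
Qed.

Lemma sol_mu_second_difference (x eps : R) : -a < x < a -> 0 < eps ->
  exists s, 0 < s /\ -a <= x - s /\ x + s <= a /\
    forall t, thmin < t < thmax ->
      mu (x + s) t + mu (x - s) t - 2 * mu x t <= (mu_xx x t + eps) * s ^ 2.
Proof.
  intros Hx Heps; destruct sol as [[HD [_ [_ [_ [Cmuxx _]]]]] _].
  destruct (rect_cont_uniform_in_t a thmin thmax mu_xx x ltac:(lra) Cmuxx ltac:(lra)
    eps Heps) as [d [Hd Hmod]].
  set (s := Rmin (d / 2) (Rmin ((a - x) / 2) ((x + a) / 2))).
  assert (Hs1 : s <= d / 2) by apply Rmin_l.
  assert (Hs2 : s <= (a - x) / 2) by (eapply Rle_trans; [apply Rmin_r | apply Rmin_l]).
  assert (Hs3 : s <= (x + a) / 2) by (eapply Rle_trans; [apply Rmin_r | apply Rmin_r]).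
  assert (Hs0 : 0 < s) by (apply Rmin_pos; [lra | apply Rmin_pos; lra]).
  exists s; split; [exact Hs0|]; split; [lra|]; split; [lra|]; intros t Ht.
  apply (second_difference_le (fun y => mu y t) (fun y => mu_x y t) (fun y => mu_xx y t));
    [lra| |].
  - intros y Hy; destruct (HD y t) as [D1 [_ [D3 _]]]; [split; lra|]; split; assumption.
  - intros y Hy.
    assert (Hclose : Rabs (y - x) < d) by (unfold Rabs; destruct Rcase_abs; lra).
    pose proof (Hmod y t ltac:(lra) ltac:(lra) Hclose) as Hyt; apply Rabs_def2 in Hyt; lra.
Qed.

(* Where 0 <= ν <= 1 the reaction term is a source, so w is weakly concave:
   integrating the pointwise bound against g_τ and using the integrated
   equation, its second differences are at most e s^2. *)
Lemma sol_w_second_difference (x e : R) : -a < x < a -> nu x <= 1 -> 0 < e ->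
  exists s, 0 < s /\ -a <= x - s /\ x + s <= a /\
    w (x + s) + w (x - s) - 2 * w x <= e * s ^ 2.
Proof.
  intros Hx Hnu1 He; assert (Hx' : -a <= x <= a) by lra.
  set (eps := e / (thmax * (thmax - thmin))).
  assert (Heps : 0 < eps) by (unfold eps; apply Rdiv_lt_0_compat; nra).
  destruct (sol_mu_second_difference x eps Hx Heps) as [s [Hs [Hleft [Hright Hpt]]]].
  exists s; split; [exact Hs|]; split; [exact Hleft|]; split; [exact Hright|].
  assert (Int_g : ex_RInt g thmin thmax)
    by (apply relcont_ex_RInt; [lra | apply g_tau_relcont]).
  assert (Int_gxx : ex_RInt (fun t => g t * mu_xx x t) thmin thmax).
  { destruct sol as [[_ [_ [_ [_ [Cmuxx _]]]]] _].
    apply relcont_mult_ex_RInt; [lra | apply g_tau_relcont|].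
    exact (rect_slice_relcont a thmin thmax _ x Cmuxx Hx'). }
  pose proof (sol_gmu_ex_RInt (x + s) ltac:(lra)) as Int_plus.
  pose proof (sol_gmu_ex_RInt (x - s) ltac:(lra)) as Int_minus.
  pose proof (sol_gmu_ex_RInt x Hx') as Int_x.
  assert (Hsd : w (x + s) + w (x - s) - 2 * w x = RInt (fun t =>
      g t * mu (x + s) t + g t * mu (x - s) t - 2 * (g t * mu x t)) thmin thmax).
  { unfold weighted_marginal.
    rewrite RInt_minus_R, RInt_plus_R, RInt_scal_R;
      auto using ex_RInt_plus_R, ex_RInt_scal_R. }
  assert (Hbound : RInt (fun t =>
      g t * mu (x + s) t + g t * mu (x - s) t - 2 * (g t * mu x t)) thmin thmax <=
    RInt (fun t => s ^ 2 * (g t * mu_xx x t) + s ^ 2 * eps * g t) thmin thmax).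
  { apply RInt_le; [lra | auto using ex_RInt_minus_R, ex_RInt_plus_R, ex_RInt_scal_R
      | auto using ex_RInt_plus_R, ex_RInt_scal_R|].
    intros t Ht; pose proof (Hpt t Ht).
    destruct (g_tau_bounds thmin thmax tau t tau_range ltac:(lra)); nra. }
  rewrite RInt_plus_R, !RInt_scal_R, sol_integrated_equation in Hbound
    by auto using ex_RInt_scal_R.
  assert (Hg_total : RInt g thmin thmax <= (thmax - thmin) * thmax).
  { apply Rle_trans with (RInt (fun _ => thmax) thmin thmax);
      [| right; apply RInt_const_R].
    apply RInt_le; [lra | exact Int_g | apply ex_RInt_const_R|].
    intros t Ht; apply (g_tau_bounds thmin thmax tau t tau_range); lra. }
  assert (Hsource : 0 <= r * nu x * (1 - nu x))
    by (pose proof (sol_nu_nonneg x Hx'); apply Rmult_le_pos; [apply Rmult_le_pos|]; lra).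
  assert (Heps_e : eps * ((thmax - thmin) * thmax) = e) by (unfold eps; field; lra).
  assert (Hs2 : 0 < s ^ 2) by (apply pow_lt; exact Hs).
  assert (s ^ 2 * eps * RInt g thmin thmax <= s ^ 2 * e).
  { rewrite <- Heps_e, Rmult_assoc; apply Rmult_le_compat_l; [lra|].
    apply Rmult_le_compat_l; lra. }
  nra.
Qed.

(* The hypothesis of [concave_barrier] with m = θ_min: w < θ_min forces ν < 1. *)
Lemma sol_w_weakly_concave (x : R) : -a < x < a -> w x < thmin ->
  forall e, 0 < e -> exists s, 0 < s /\ -a <= x - s /\ x + s <= a /\
    w (x + s) + w (x - s) - 2 * w x <= e * s ^ 2.
Proof.
  intros Hx Hw e He; apply sol_w_second_difference; [exact Hx | | exact He].
  destruct (sol_marginal_bounds x ltac:(lra)) as [Hlow _]; nra.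
Qed.

(* The barrier at ξ = 0 gives w(0) >= θ_min / 4, hence ν(0) >= θ_min / (4 θ_max). *)
Lemma sol_nu_origin : thmin / (4 * thmax) <= nu 0.
Proof.
  assert (Hw0 : thmin * (a - 0) ^ 2 / (4 * a ^ 2) <= w 0).
  { apply (concave_barrier a thmin w a_pos thmin_pos sol_w_relcont sol_w_left);
      [rewrite sol_w_right; lra | exact sol_w_weakly_concave | lra]. }
  replace (thmin * (a - 0) ^ 2 / (4 * a ^ 2)) with (thmin / 4) in Hw0 by (field; lra).
  destruct (sol_marginal_bounds 0 ltac:(lra)) as [_ Hup].
  apply Rmult_le_reg_l with (4 * thmax); [lra|].
  replace (4 * thmax * (thmin / (4 * thmax))) with thmin by (field; lra); lra.
Qed.

End ZeroSpeedSolution.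

Theorem lemma3p4 (thmin thmax alpha r : R)
  (Hth0 : 0 < thmin) (Hth : thmin < thmax) (Halpha : 0 < alpha) (Hr : 0 < r) :
  exists eps0, 0 < eps0 /\
  exists a0, forall a, a0 <= a ->
  forall tau, 0 <= tau <= 1 ->
  forall (c : R) (mu mu_x mu_t mu_xx mu_xt mu_tx mu_tt : R -> R -> R) (nu : R -> R),
    slab_solution thmin thmax alpha r tau a c mu mu_x mu_t mu_xx mu_xt mu_tx mu_tt nu ->
    c = 0 ->
    nu 0 > eps0.
Proof.
  exists (thmin / (8 * thmax)); split; [apply Rdiv_lt_0_compat; lra|].
  exists 1; intros a Ha tau Htau c mu mu_x mu_t mu_xx mu_xt mu_tx mu_tt nu Hsol Hc; subst c.
  pose proof (sol_nu_origin thmin thmax alpha r tau a mu mu_x mu_t mu_xx mu_xt mu_tx mu_tt nu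
    Hth0 Hth (Rlt_le _ _ Hr) Htau ltac:(lra) Hsol) as Hnu0.
  assert (thmin / (8 * thmax) < thmin / (4 * thmax)).
  { apply Rmult_lt_reg_l with (8 * thmax); [lra|].
    replace (8 * thmax * (thmin / (8 * thmax))) with thmin by (field; lra).
    replace (8 * thmax * (thmin / (4 * thmax))) with (2 * thmin) by (field; lra); lra. }
  lra.
Qed.
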